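(* Let $m\ge 2$. Consider the following three (not necessarily simple) graphs. (1) ($s=1$) Let $C_{4m+2}=v_0v_1\cdots v_{4m+1}v_0$. Let $\mathscr A$ be any partition of the even-indexed vertices other than $v_0$ into blocks of size $2$, $\mathscr B$ any partition of the odd-indexed vertices other than $v_{2m+1}$ into blocks of size $2$, and $\mathscr C=\{v_0,v_{2m+1}\}$. $G^1_{2m+1}(\mathscr A,\mathscr B,\mathscr C)$ is obtained from $C_{4m+2}$ by identifying the two vertices of each block of $\mathscr A\cup\mathscr B\cup\{\mathscr C\}$. (2) ($s=2$) Let $C_{4m+1}=v_0v_1\cdots v_{4m}v_0$. Let $\mathscr A$ be any partition of the even-indexed vertices other than $v_0$ into blocks of size $2$, $\mathscr B$ any partition of the odd-indexed vertices into blocks of size $2$, and $\mathscr C=\{v_0\}$. $G^2_{2m+1}(\mathscr A,\mathscr B,\mathscr C)$ is obtained from $C_{4m+1}$ by identifying the two vertices of each block of $\mathscr A\cup\mathscr B$ (and leaving $v_0$ alone). (3) ($s=3$) Let $C_{4m+3}=v_0v_1\cdots v_{4m+2}v_0$. Let $\mathscr C=\{v_0,v_{m+1},v_{3m+2}\}$, let $\mathscr A$ be any partition of the even-indexed vertices not in $\mathscr C$ into blocks of size $2$ and $\mathscr B$ any partition of the odd-indexed vertices not in $\mathscr C$ into blocks of size $2$. $G^3_{2m+1}(\mathscr A,\mathscr B,\mathscr C)$ is obtained from $C_{4m+3}$ by identifying the three vertices of $\mathscr C$ into one vertex and identifying the two vertices of each block of $\mathscr A\cup\mathscr B$. Then $\chi_{la}(G^s_{2m+1}(\mathscr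 A,\mathscr B,\mathscr C))=3$ for $s=1,2,3$.
   Context: Identifying a set of pairwise nonadjacent vertices means replacing them by one new vertex incident to all edges previously incident to any of them (parallel edges may arise). For a connected (multi)graph $G$ with edge set $E$, $|E|=q$, a local antimagic labeling is a bijection $f:E\to\{1,\dots,q\}$ such that adjacent vertices $x,y$ satisfy $f^+(x)\ne f^+(y)$, where $f^+(x)$ is the sum of the labels of the edges incident to $x$; $\chi_{la}(G)$ is the minimum number of distinct values of $f^+$ over all local antimagic labelings of $G$. *)

From mathcomp Require Import all_boot all_order.
Set Implicit Arguments. Unset Strict Implicit. Unset Printing Implicit Defensive.

(* The cycle C_n has vertices v_i = i : 'I_n and edges e_i = v_i v_{i+1 mod n},
   indexed by i : 'I_n.  Identifying the vertices of each block of a partition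
   P of the vertex set yields a multigraph whose vertex set is P (a block X
   is the new vertex) and whose edges are the e_i; edge e_i is incident to the
   vertex/block X iff one of its endpoints v_i, v_{i+1} lies in X. *)

Definition cyc_incident n (X : {set 'I_n}) (i : 'I_n) : bool :=
  (i \in X) || (ordS i \in X).

Definition vsum n (f : 'I_n -> nat) (X : {set 'I_n}) : nat :=
  \sum_(i | cyc_incident X i) f i.

Definition edge_labeling n (f : 'I_n -> nat) : Prop :=
  injective f /\ (forall i, 1 <= f i <= n) /\
  (forall k, 1 <= k <= n -> exists i, f i = k).

Definition local_antimagic n (P : {set {set 'I_n}}) (f : 'I_n -> nat) : Prop :=
  edge_labeling f /\
  forall X Y, X \in P -> Y \in P -> X != Y ->
    (exists i : 'I_n, (i \in X /\ ordS i \in Y) \/ (i \in Y /\ ordS i \in X)) ->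
    vsum f X != vsum f Y.

Definition nvals n (P : {set {set 'I_n}}) (f : 'I_n -> nat) : nat :=
  size (undup [seq vsum f X | X <- enum P]).

Definition chi_la_is n (P : {set {set 'I_n}}) (k : nat) : Prop :=
  (exists f, local_antimagic P f /\ nvals P f = k) /\
  (forall f, local_antimagic P f -> k <= nvals P f).

Definition pair_partition n (A : {set {set 'I_n}}) (S : {set 'I_n}) : Prop :=
  partition A S /\ (forall b : {set 'I_n}, b \in A -> #|b| = 2).

(* Label the edges e_0, e_1, ..., e_(n-1) of the cycle by 1, n, 2, n-1, 3, ...
   Then the two edges at v_k carry labels summing to n+2 for even k > 0 and to
   n+1 for odd k, so every block of A has sum 2(n+2), every block of B has sum
   2(n+1), and the block C gets a third value.  Away from C the parity of the
   vertices alternates along the cycle, so no edge joins two blocks of A or two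
   blocks of B: this labeling is local antimagic with 3 values.
   Conversely, C contains v_0 and v_(j mod n) for some odd j (j = 2m+1 for s = 1,
   j = n otherwise), so the cycle projects onto a closed walk of odd length in
   the identified graph, along which a proper colouring such as f^+ cannot
   alternate between two values. *)

From mathcomp Require Import all_boot all_order zify.
Set Implicit Arguments. Unset Strict Implicit. Unset Printing Implicit Defensive.

Definition zigzag n (i : 'I_n) : nat := if odd i then n - i./2 else i./2 + 1.

Definition vertex_weight n (k : nat) : nat :=
  if k == 0 then n./2 + 2 else if odd k then n.+1 else n.+2.

Lemma zigzag_edge_labeling n : edge_labeling (@zigzag n).
Proof.
split; [|split].
- move=> i j; rewrite /zigzag => eq_ij; apply/val_inj => /=.
  have := ltn_ord i; have := ltn_ord j; move: eq_ij.
  by case: ifP; case: ifP; lia.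
- by move=> i; rewrite /zigzag; have := ltn_ord i; case: ifP; lia.
- move=> k k_range; have [k_small|k_large] := leqP (2 * k) n.+1.
  + have i_lt : 2 * k.-1 < n by lia.
    by exists (Ordinal i_lt); rewrite /zigzag /=; case: ifP; lia.
  + have i_lt : (2 * (n - k)).+1 < n by lia.
    by exists (Ordinal i_lt); rewrite /zigzag /=; case: ifP; lia.
Qed.

Lemma val_ordS n (i : 'I_n) : val (ordS i) = if i.+1 == n then 0 else i.+1.
Proof.
rewrite /=; case: eqP => [->|ne]; first by rewrite modnn.
by rewrite modn_small //; have := ltn_ord i; lia.
Qed.

Lemma val_ord_pred n (i : 'I_n) :
  val (ord_pred i) = if (i : nat) == 0 then n.-1 else i.-1.
Proof.
have := ltn_ord i; rewrite /=; case: eqP => [->|ne] lt_in.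
  by rewrite modn_small //; lia.
have -> : (i + n).-1 = i.-1 + n by lia.
by rewrite modnDr modn_small //; lia.
Qed.

Lemma val_iter_ordS n (v : 'I_n) k : val (iter k (@ordS n) v) = (v + k) %% n.
Proof.
elim: k => [|k IHk]; first by rewrite addn0 modn_small.
by rewrite iterS /= -/(val _) IHk addnS -[((v + k) %% n).+1]addn1 modnDml addn1.
Qed.

Lemma zigzag_at_vertex n (v : 'I_n) :
  zigzag v + zigzag (ord_pred v) = vertex_weight n v.
Proof.
rewrite /zigzag /vertex_weight val_ord_pred; have := ltn_ord v.
by repeat case: ifP; lia.
Qed.

Lemma vsum_indep n (f : 'I_n -> nat) (X : {set 'I_n}) :
  (forall i, i \in X -> ordS i \notin X) ->
  vsum f X = \sum_(v in X) (f v + f (ord_pred v)).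
Proof.
move=> X_indep; rewrite /vsum /cyc_incident (bigID (mem X)) big_split /=.
congr (_ + _); first by apply: eq_bigl => i; rewrite andb_idl // => ->.
rewrite (reindex (@ord_pred n)); last exact: onW_bij (ord_pred_bij n).
apply: eq_bigl => v; rewrite ord_predK.
case Xv: (v \in X); case Xp: (ord_pred v \in X) => //=.
by move: (X_indep _ Xp); rewrite ord_predK Xv.
Qed.

Lemma vsum_zigzag n (X : {set 'I_n}) :
  (forall i, i \in X -> ordS i \notin X) ->
  vsum (@zigzag n) X = \sum_(v in X) vertex_weight n v.
Proof. by move/vsum_indep->; apply: eq_bigr => v _; rewrite zigzag_at_vertex. Qed.

Lemma sum_set_vals n (X : {set 'I_n}) (s : seq nat) (g : nat -> nat) :
  (forall v : 'I_n, (v \in X) = (val v \in s)) -> uniq s -> {in s, forall k, k < n} ->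
  \sum_(v in X) g v = \sum_(k <- s) g k.
Proof.
move=> X_s s_uniq s_lt; rewrite (eq_bigl (fun v : 'I_n => val v \in s)) //.
rewrite -(big_mkord (mem s)) -big_filter; apply/perm_big/uniq_perm => //.
  exact/filter_uniq/iota_uniq.
by move=> k; rewrite mem_filter mem_index_iota andb_idr // => /s_lt; lia.
Qed.

Lemma pair_partition_sub n (A : {set {set 'I_n}}) S X v :
  pair_partition A S -> X \in A -> v \in X -> v \in S.
Proof. by case=> /cover_partition <- _ AX Xv; apply/bigcupP; exists X. Qed.

Lemma three_le_nvals n (P : {set {set 'I_n}}) f X Y Z :
  X \in P -> Y \in P -> Z \in P ->
  vsum f X != vsum f Y -> vsum f Y != vsum f Z -> vsum f X != vsum f Z ->
  3 <= nvals P f.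
Proof.
move=> PX PY PZ neXY neYZ neXZ.
apply: (@uniq_leq_size _ [:: vsum f X; vsum f Y; vsum f Z]).
  by rewrite /= !inE negb_or neXY neXZ neYZ.
move=> x; rewrite !inE mem_undup => /or3P[] /eqP->; apply: map_f; by rewrite mem_enum.
Qed.

Lemma nvals_le_size n (P : {set {set 'I_n}}) f (s : seq nat) :
  (forall X, X \in P -> vsum f X \in s) -> nvals P f <= size s.
Proof.
move=> P_s; apply: uniq_leq_size (undup_uniq _) _ => x.
by rewrite mem_undup => /mapP[X]; rewrite mem_enum => /P_s Xs ->.
Qed.

Lemma two_periodic_odd T (c : nat -> T) :
  (forall k, c k.+2 = c k) -> forall k, c k = c (odd k).
Proof.
move=> c_per; elim/ltn_ind=> -[|[|k]] IHk //=.
by rewrite c_per IHk // negbK.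
Qed.

Section OddClosedWalk.

Variables (n : nat) (P : {set {set 'I_n}}).
Hypotheses (P_cover : cover P = [set: 'I_n]) (P_triv : trivIset P).
Hypothesis P_indep : forall X, X \in P -> forall i, i \in X -> ordS i \notin X.

Lemma nvals_ge3_odd_closed_walk f X v j :
  local_antimagic P f -> X \in P -> v \in X -> odd j -> iter j (@ordS n) v \in X ->
  3 <= nvals P f.
Proof.
move=> [_ f_proper] PX Xv odd_j Xvj.
pose Y k := pblock P (iter k (@ordS n) v).
have PY k : Y k \in P by rewrite pblock_mem // P_cover inE.
have YE k : iter k (@ordS n) v \in Y k by rewrite mem_pblock P_cover inE.
have step k : vsum f (Y k) != vsum f (Y k.+1).
  apply: f_proper; [exact: PY | exact: PY | |].
    by apply/eqP => Yeq; move: (P_indep (PY k) (YE k)); rewrite Yeq (YE k.+1).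
  by exists (iter k (@ordS n) v); left; split; apply: YE.
rewrite leqNgt; apply/negP => few.
have period k : vsum f (Y k.+2) = vsum f (Y k).
  apply/eqP; case: eqP => // /eqP ne.
  have := three_le_nvals (PY k) (PY k.+1) (PY k.+2) (step k) (step k.+1).
  by rewrite eq_sym ne leqNgt few => /(_ isT).
have := two_periodic_odd period j; rewrite odd_j.
have -> : Y j = Y 0 by rewrite /Y (def_pblock P_triv PX Xvj) (def_pblock P_triv PX Xv).
by move=> Y01; move: (step 0); rewrite Y01 eqxx.
Qed.

End OddClosedWalk.

Section IdentifiedCycle.

Variables (n : nat) (C : {set 'I_n}) (A B : {set {set 'I_n}}).
Hypothesis C_gt0 : forall v : 'I_n, v \notin C -> 0 < v.
Hypothesis C_indep : forall i, i \in C -> ordS i \notin C.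
Hypothesis A_part : pair_partition A [set v : 'I_n | ~~ odd v & v \notin C].
Hypothesis B_part : pair_partition B [set v : 'I_n | odd v & v \notin C].

Let P := A :|: B :|: [set C].

Lemma odd_ordS_notC i : ordS i \notin C -> odd (ordS i) = ~~ odd i.
Proof. by move/C_gt0; rewrite val_ordS; case: eqP. Qed.

Lemma weight_notC (v : 'I_n) :
  v \notin C -> vertex_weight n v = if odd v then n.+1 else n.+2.
Proof. by move/C_gt0/gtn_eqF; rewrite /vertex_weight => ->. Qed.

Lemma pair_block_parity X :
  X \in A :|: B -> #|X| = 2 /\ {in X &, forall u w : 'I_n, (u \notin C) && (odd u == odd w)}.
Proof.
case/setUP => [AX|BX]; [split; first exact: A_part.2 | split; first exact: B_part.2].
- move=> u w Xu Xw; move: (pair_partition_sub A_part AX Xu) (pair_partition_sub A_part AX Xw).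
  by rewrite !inE => /andP[/negbTE-> ->] /andP[/negbTE->].
- move=> u w Xu Xw; move: (pair_partition_sub B_part BX Xu) (pair_partition_sub B_part BX Xw).
  by rewrite !inE => /andP[-> ->] /andP[->].
Qed.

Lemma cover_pair_partitions :
  cover (A :|: B) = [set v : 'I_n | v \notin C].
Proof.
rewrite /cover bigcup_setU -/(cover A) -/(cover B).
rewrite (cover_partition A_part.1) (cover_partition B_part.1).
by apply/setP => v; rewrite !inE; case: (odd v); case: (v \in C).
Qed.

Lemma cover_identified : cover P = [set: 'I_n].
Proof.
rewrite /P {1}/cover bigcup_setU big_set1 -/(cover (A :|: B)) cover_pair_partitions.
by apply/setP => v; rewrite !inE orNb.
Qed.

Lemma trivIset_identified : trivIset P.
Proof.
have [/and3P[_ trivA _] /and3P[_ trivB _]] := (A_part.1, B_part.1).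
apply: trivIsetU; [apply: trivIsetU => // | exact: trivIset1 |].
- rewrite (cover_partition A_part.1) (cover_partition B_part.1) -setI_eq0.
  by apply/eqP/setP => v; rewrite !inE; case: (odd v); rewrite ?andbF.
- rewrite cover_pair_partitions cover1 -setI_eq0.
  by apply/eqP/setP => v; rewrite !inE andNb.
Qed.

Lemma indep_identified X : X \in P -> forall i, i \in X -> ordS i \notin X.
Proof.
rewrite /P inE => /orP[/pair_block_parity[_ X_par] | /set1P->]; last exact: C_indep.
move=> i Xi; apply/negP => Xs; have /andP[_ /eqP] := X_par _ _ Xs Xi.
by case/andP: (X_par _ _ Xs Xs) => /odd_ordS_notC-> _; case: (odd i).
Qed.

Lemma pblock_C v : v \in C -> pblock P v = C.
Proof. by apply: def_pblock; rewrite ?trivIset_identified // /P !inE eqxx orbT. Qed.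

Lemma vsum_pblock v :
  vsum (@zigzag n) (pblock P v) =
    if v \in C then vsum (@zigzag n) C else 2 * vertex_weight n v.
Proof.
have Pv : pblock P v \in P by rewrite pblock_mem // cover_identified inE.
have Xv : v \in pblock P v by rewrite mem_pblock cover_identified inE.
case: ifP => [/pblock_C-> // | Cv]; move: Pv Xv; rewrite {1}/P inE.
case/orP => [X_AB Xv | /set1P-> ]; last by rewrite Cv.
have [card2 X_par] := pair_block_parity X_AB.
rewrite vsum_zigzag; last by apply: indep_identified; rewrite /P in_setU X_AB.
rewrite (eq_bigr (fun=> vertex_weight n v)) ?sum_nat_const ?card2 // => u Xu.
case/andP: (X_par _ _ Xu Xv) => Cu /eqP odd_uv.
by rewrite !weight_notC ?Cv // odd_uv.
Qed.

Hypothesis C_value : vsum (@zigzag n) C \notin [:: 2 * n.+1; 2 * n.+2].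

Lemma vsum_adjacent_blocks X Y i :
  X \in P -> Y \in P -> X != Y -> i \in X -> ordS i \in Y ->
  vsum (@zigzag n) X != vsum (@zigzag n) Y.
Proof.
move=> PX PY + Xi Yi.
rewrite -(def_pblock trivIset_identified PX Xi) -(def_pblock trivIset_identified PY Yi).
rewrite !vsum_pblock; case Ci: (i \in C); case Cs: (ordS i \in C).
- by rewrite !pblock_C ?eqxx.
- move=> _; rewrite weight_notC ?Cs //.
  by apply: contraNneq C_value => ->; case: odd; rewrite !inE eqxx ?orbT.
- move=> _; rewrite weight_notC ?Ci // eq_sym.
  by apply: contraNneq C_value => ->; case: odd; rewrite !inE eqxx ?orbT.
- move=> _; rewrite !weight_notC ?Ci ?Cs // odd_ordS_notC ?Cs //.
  by case: (odd i) => /=; lia.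
Qed.

Lemma zigzag_local_antimagic : local_antimagic P (@zigzag n).
Proof.
split=> [|X Y PX PY XY [i [[Xi Yi] | [Yi Xi]]]]; first exact: zigzag_edge_labeling.
  exact: (vsum_adjacent_blocks PX PY XY Xi Yi).
by rewrite eq_sym (vsum_adjacent_blocks PY PX _ Yi Xi) // eq_sym.
Qed.

Lemma nvals_zigzag : nvals P (@zigzag n) <= 3.
Proof.
apply: (@nvals_le_size _ _ _ [:: vsum (@zigzag n) C; 2 * n.+1; 2 * n.+2]) => X PX.
have [/pair_block_parity[card2 X_par] | XC] : X \in A :|: B \/ X = C.
  by move: PX; rewrite /P inE => /orP[|/set1P]; [left | right].
- have [u Xu] : exists u, u \in X by apply/set0Pn; rewrite -card_gt0 card2.
  rewrite -(def_pblock trivIset_identified PX Xu) vsum_pblock.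
  case/andP: (X_par _ _ Xu Xu) => Cu _.
  by rewrite (negbTE Cu) weight_notC //; case: odd; rewrite !inE eqxx ?orbT.
- by rewrite XC inE eqxx.
Qed.

Lemma chi_la_identified_cycle v j :
  v \in C -> odd j -> iter j (@ordS n) v \in C -> chi_la_is P 3.
Proof.
move=> Cv odd_j Cvj.
have lower f : local_antimagic P f -> 3 <= nvals P f.
  move=> f_la; apply: (nvals_ge3_odd_closed_walk cover_identified trivIset_identified
    indep_identified f_la _ Cv odd_j Cvj).
  by rewrite /P !inE eqxx orbT.
split=> //; exists (@zigzag n); split; first exact: zigzag_local_antimagic.
by apply/eqP; rewrite eqn_leq nvals_zigzag (lower _ zigzag_local_antimagic).
Qed.

End IdentifiedCycle.

Lemma chi_la_G1 m : 0 < m ->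
  forall A B : {set {set 'I_(4 * m + 2)}},
    pair_partition A [set i : 'I_(4 * m + 2) | ~~ odd i & val i != 0] ->
    pair_partition B [set i : 'I_(4 * m + 2) | odd i & val i != 2 * m + 1] ->
    chi_la_is (A :|: B :|:
      [set [set i : 'I_(4 * m + 2) | (val i == 0) || (val i == 2 * m + 1)]]) 3.
Proof.
move=> m_gt0 A B; set C := [set i : 'I_(4 * m + 2) | (val i == 0) || _].
have C_vals v : (v \in C) = (val v \in [:: 0; 2 * m + 1]) by rewrite !inE.
have C_indep i : i \in C -> ordS i \notin C.
  by rewrite !C_vals !inE val_ordS /=; have := ltn_ord i; case: ifP; lia.
have -> : [set i : 'I_(4 * m + 2) | ~~ odd i & val i != 0] =
          [set i : 'I_(4 * m + 2) | ~~ odd i & i \notin C].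
  by apply/setP => i; rewrite !inE /=; lia.
have -> : [set i : 'I_(4 * m + 2) | odd i & val i != 2 * m + 1] =
          [set i : 'I_(4 * m + 2) | odd i & i \notin C].
  by apply/setP => i; rewrite !inE /=; lia.
have n_gt0 : 0 < 4 * m + 2 by lia.
move=> A_part B_part.
apply: (chi_la_identified_cycle _ C_indep A_part B_part _
         (v := Ordinal n_gt0) (j := 2 * m + 1)).
- by move=> v; rewrite C_vals !inE /=; lia.
- rewrite vsum_zigzag // (sum_set_vals _ C_vals) /=.
  + by rewrite !big_cons big_nil /vertex_weight /= !inE; repeat case: ifP; lia.
  + by rewrite inE; lia.
  + by move=> k; rewrite !inE; lia.
- by rewrite inE.
- lia.
- by rewrite inE val_iter_ordS add0n modn_small ?eqxx ?orbT //; lia.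
Qed.

Lemma chi_la_G2 m : 0 < m ->
  forall A B : {set {set 'I_(4 * m + 1)}},
    pair_partition A [set i : 'I_(4 * m + 1) | ~~ odd i & val i != 0] ->
    pair_partition B [set i : 'I_(4 * m + 1) | odd i] ->
    chi_la_is (A :|: B :|: [set [set i : 'I_(4 * m + 1) | val i == 0]]) 3.
Proof.
move=> m_gt0 A B; set C := [set i : 'I_(4 * m + 1) | val i == 0].
have C_vals v : (v \in C) = (val v \in [:: 0]) by rewrite !inE.
have C_indep i : i \in C -> ordS i \notin C.
  by rewrite !C_vals !inE val_ordS /=; have := ltn_ord i; case: ifP; lia.
have -> : [set i : 'I_(4 * m + 1) | ~~ odd i & val i != 0] =
          [set i : 'I_(4 * m + 1) | ~~ odd i & i \notin C].
  by apply/setP => i; rewrite !inE /=; lia.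
have -> : [set i : 'I_(4 * m + 1) | odd i] = [set i : 'I_(4 * m + 1) | odd i & i \notin C].
  by apply/setP => i; rewrite !inE /=; lia.
have n_gt0 : 0 < 4 * m + 1 by lia.
move=> A_part B_part.
apply: (chi_la_identified_cycle _ C_indep A_part B_part _
         (v := Ordinal n_gt0) (j := 4 * m + 1)).
- by move=> v; rewrite C_vals !inE /=; lia.
- rewrite vsum_zigzag // (sum_set_vals _ C_vals) //=.
  + by rewrite big_cons big_nil /vertex_weight /= !inE; lia.
  + by move=> k; rewrite !inE; lia.
- by rewrite inE.
- lia.
- by rewrite inE val_iter_ordS add0n modnn.
Qed.

Lemma chi_la_G3 m : 0 < m ->
  forall A B : {set {set 'I_(4 * m + 3)}},
    let C := [set i : 'I_(4 * m + 3) |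
                [|| val i == 0, val i == m + 1 | val i == 3 * m + 2]] in
    pair_partition A [set i : 'I_(4 * m + 3) | ~~ odd i & i \notin C] ->
    pair_partition B [set i : 'I_(4 * m + 3) | odd i & i \notin C] ->
    chi_la_is (A :|: B :|: [set C]) 3.
Proof.
move=> m_gt0 A B C A_part B_part.
have C_vals v : (v \in C) = (val v \in [:: 0; m + 1; 3 * m + 2]) by rewrite !inE.
have C_indep i : i \in C -> ordS i \notin C.
  by rewrite !C_vals !inE val_ordS /=; have := ltn_ord i; case: ifP; lia.
have n_gt0 : 0 < 4 * m + 3 by lia.
apply: (chi_la_identified_cycle _ C_indep A_part B_part _
         (v := Ordinal n_gt0) (j := 4 * m + 3)).
- by move=> v; rewrite C_vals !inE /=; lia.
- rewrite vsum_zigzag // (sum_set_vals _ C_vals) /=.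
  + by rewrite !big_cons big_nil /vertex_weight /= !inE; repeat case: ifP; lia.
  + by rewrite !inE; lia.
  + by move=> k; rewrite !inE; lia.
- by rewrite inE.
- lia.
- by rewrite inE val_iter_ordS add0n modnn.
Qed.

Theorem mainTheorem10 (m : nat) : 2 <= m ->
  (* s = 1 : C_{4m+2}, C = {v_0, v_{2m+1}} *)
  (forall A B : {set {set 'I_(4 * m + 2)}},
     pair_partition A [set i : 'I_(4 * m + 2) | ~~ odd i & val i != 0] ->
     pair_partition B [set i : 'I_(4 * m + 2) | odd i & val i != 2 * m + 1] ->
     chi_la_is (A :|: B :|: [set [set i : 'I_(4 * m + 2) | (val i == 0) || (val i == 2 * m + 1)]]) 3)
  /\
  (* s = 2 : C_{4m+1}, C = {v_0} *)
  (forall A B : {set {set 'I_(4 * m + 1)}},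
     pair_partition A [set i : 'I_(4 * m + 1) | ~~ odd i & val i != 0] ->
     pair_partition B [set i : 'I_(4 * m + 1) | odd i] ->
     chi_la_is (A :|: B :|: [set [set i : 'I_(4 * m + 1) | val i == 0]]) 3)
  /\
  (* s = 3 : C_{4m+3}, C = {v_0, v_{m+1}, v_{3m+2}} *)
  (forall A B : {set {set 'I_(4 * m + 3)}},
     let C := [set i : 'I_(4 * m + 3) |
                 [|| val i == 0, val i == m + 1 | val i == 3 * m + 2]] in
     pair_partition A [set i : 'I_(4 * m + 3) | ~~ odd i & i \notin C] ->
     pair_partition B [set i : 'I_(4 * m + 3) | odd i & i \notin C] ->
     chi_la_is (A :|: B :|: [set C]) 3).
Proof.
move=> m_ge2; have m_gt0 : 0 < m by lia.
by split; [exact: chi_la_G1 | split; [exact: chi_la_G2 | exact: chi_la_G3]].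
Qed.
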